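(* Let $\mathcal{M}=(\pi,x)$ be an incentive compatible auction mechanism with display prices. Then for every advertiser $i$, every display price profile $\mathbf{p}$ and every cost-report profile $\mathbf{c}'_{-i}$ of the others, there is a quantity $U_i(\mathbf{c}'_{-i},\mathbf{p})$ not depending on $i$'s cost report such that for all $c_i\in[\underline{c}_i,\overline{c}_i]$, $$x_i(c_i,\mathbf{c}'_{-i},\mathbf{p})=v_i(c_i,p_i)\pi_i(c_i,\mathbf{c}'_{-i},\mathbf{p})-\lambda_i(p_i)\int_{c_i}^{\overline{c}_i}\pi_i(z,\mathbf{c}'_{-i},\mathbf{p})\,dz-U_i(\mathbf{c}'_{-i},\mathbf{p}).$$
   Context: There are advertisers $N=\{1,\dots,n\}$ competing for a single ad slot. Advertiser $i$ has a private product cost $c_i\in[\underline{c}_i,\overline{c}_i]$ and sets a display price $p_i$. Her conversion-rate function is $\lambda_i:\mathbb{R}\to(0,1]$, and her value when displayed at price $p_i$ is $v_i(c_i,p_i)=(p_i-c_i)\lambda_i(p_i)$. Each advertiser reports a cost $c_i'$ and a display price $p_i$; write $\mathbf{c}'=(c_i',\mathbf{c}'_{-i})$, $\mathbf{p}=(p_i,\mathbf{p}_{-i})$. An auction mechanism $\mathcal{M}=(\pi,x)$ consists of allocation functions $\pi_i(\mathbf{c}',\mathbf{p})\in\{0,1\}$ (at most one advertiser wins the slot) and payment functions $x_i(\mathbf{c}',\mathbf{p})\in\mathbb{R}$. The utility of advertiser $i$ with true cost $c_i$ is $u_i(c_i,\mathbf{c}',\mathbf{p},\mathcal{M})=v_i(c_i,p_i)\pi_i(\mathbf{c}',\mathbf{p})-x_i(\mathbf{c}',\mathbf{p})$.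 $\mathcal{M}$ is incentive compatible (IC) if for all $i$, all $c_i$, all $\mathbf{p}$ and all $\mathbf{c}'$: $u_i(c_i,(c_i,\mathbf{c}'_{-i}),\mathbf{p},\mathcal{M})\ge u_i(c_i,(c_i',\mathbf{c}'_{-i}),\mathbf{p},\mathcal{M})$. *)

From Stdlib Require Import Reals.
From Coquelicot Require Import Coquelicot.
From mathcomp Require Import ssreflect ssrbool eqtype ssrnat fintype.
Open Scope R_scope.

(* profile (c_i, c'_{-i}) : replace entry i of c' by z *)
Definition upd {n : nat} (c' : 'I_n -> R) (i : 'I_n) (z : R) : 'I_n -> R :=
  fun j => if j == i then z else c' j.

Definition b2R (b : bool) : R := if b then 1 else 0.

Definition value (lam : R -> R) (c p : R) : R := (p - c) * lam p.

Definition utility {n : nat} (lam : 'I_n -> R -> R)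
  (pi : 'I_n -> ('I_n -> R) -> ('I_n -> R) -> bool)
  (x : 'I_n -> ('I_n -> R) -> ('I_n -> R) -> R)
  (i : 'I_n) (ci : R) (c' p : 'I_n -> R) : R :=
  value (lam i) ci (p i) * b2R (pi i c' p) - x i c' p.

Definition in_range {n : nat} (lo hi c : 'I_n -> R) : Prop :=
  forall j, lo j <= c j <= hi j.

Definition single_slot {n : nat}
  (pi : 'I_n -> ('I_n -> R) -> ('I_n -> R) -> bool) : Prop :=
  forall c' p i j, pi i c' p -> pi j c' p -> i = j.

Definition IC {n : nat} (lo hi : 'I_n -> R) (lam : 'I_n -> R -> R)
  (pi : 'I_n -> ('I_n -> R) -> ('I_n -> R) -> bool)
  (x : 'I_n -> ('I_n -> R) -> ('I_n -> R) -> R) : Prop :=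
  forall (i : 'I_n) (ci : R) (p c' : 'I_n -> R),
    lo i <= ci <= hi i -> in_range lo hi c' ->
    utility lam pi x i ci (upd c' i ci) p >= utility lam pi x i ci c' p.

From Stdlib Require Import Reals Lra FunctionalExtensionality.
From Coquelicot Require Import Coquelicot.
From mathcomp Require Import ssreflect ssrbool eqtype ssrnat fintype.
Open Scope R_scope.

(* Let u(c) be the utility of reporting truthfully at cost c and g(c) the
   allocation it receives.  Incentive compatibility between true costs a and b,
   used in both directions, sandwiches u(a) - u(b) between (b - a) lam g(b) and
   (b - a) lam g(a).  Hence g is nonincreasing; being {0,1}-valued it is a step
   function with a threshold t, and squeezing the sandwich on each side of t
   gives u(c) - u(hi) = lam * int_c^hi g.  The payment formula follows with
   U = u(hi). *)

Lemma le_of_le_add_small (X Y K d : R) :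
  0 < d -> 0 <= K -> (forall e, 0 < e < d -> X <= Y + K * e) -> X <= Y.
Proof.
move=> d_gt0 K_ge0 H; apply: le_epsilon => eps eps_gt0.
set e := Rmin (d / 2) (eps / (K + 1)).
have e_gt0 : 0 < e.
  by apply: Rmin_glb_lt; [lra | apply: Rdiv_lt_0_compat; lra].
have e_lt_d : e < d by have : e <= d / 2 := Rmin_l _ _; lra.
have Ke_le : K * e <= eps.
  have e_le : e <= eps / (K + 1) := Rmin_r _ _.
  have -> : eps = (K + 1) * (eps / (K + 1)) by field; lra.
  nra.
have := H e (conj e_gt0 e_lt_d); lra.
Qed.

Lemma is_RInt_const_on (g : R -> R) (a b k : R) :
  a <= b -> (forall z, a < z < b -> g z = k) -> is_RInt g a b (k * (b - a)).
Proof.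
move=> ab g_k.
have -> : k * (b - a) = scal (b - a) k by rewrite /scal /= /mult /=; ring.
apply: (is_RInt_ext (fun _ => k)); last exact: is_RInt_const.
by rewrite Rmin_left // Rmax_right // => z /g_k.
Qed.

Lemma nonincreasing_01_threshold (g : R -> R) (c d : R) :
  c <= d -> (forall z, g z = 0 \/ g z = 1) ->
  (forall a b, c <= a -> a < b -> b <= d -> g b <= g a) ->
  exists t, c <= t <= d /\ (forall z, c < z < t -> g z = 1) /\
                           (forall z, t < z < d -> g z = 0).
Proof.
move=> cd g01 g_mono.
(* [c] belongs to [E] so that [E] is nonempty even when [g c = 0]; then [t = c]. *)
pose E z := c <= z <= d /\ (z = c \/ g z = 1).
have [t [t_ub t_lub]] : {t | is_lub E t}.
  apply: completeness; first by exists d; rewrite /is_upper_bound => z [[]].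
  by exists c; split; [lra | left].
have ct : c <= t by apply: t_ub; split; [lra | left].
have td : t <= d by apply: t_lub; rewrite /is_upper_bound => z [[]].
exists t; split; [lra | split] => z z_range; case: (g01 z) => // gz; exfalso.
- have : t <= z; last lra.
  apply: t_lub; rewrite /is_upper_bound => w [w_range [-> | gw1]]; first lra.
  apply: Rnot_lt_le => zw; have := g_mono z w ltac:(lra) zw ltac:(lra); lra.
- have : z <= t by apply: t_ub; split; [lra | right].
  lra.
Qed.

Section Envelope.

Variables (u g : R -> R) (L lo hi : R).
Hypothesis L_gt0 : 0 < L.
Hypothesis g01 : forall z, g z = 0 \/ g z = 1.
Hypothesis envelope : forall a b, lo <= a <= hi -> lo <= b <= hi ->
  (b - a) * L * g b <= u a - u b <= (b - a) * L * g a.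

Lemma envelope_nonincreasing a b : lo <= a -> a < b -> b <= hi -> g b <= g a.
Proof.
move=> lo_a ab b_hi; have := envelope a b ltac:(lra) ltac:(lra).
have abL_gt0 : 0 < (b - a) * L by apply: Rmult_lt_0_compat; lra.
move=> [lower upper]; apply: (Rmult_le_reg_l _ _ _ abL_gt0); lra.
Qed.

Lemma envelope_const a b k : lo <= a <= b -> b <= hi ->
  (forall z, a < z < b -> g z = k) -> u a - u b = L * k * (b - a).
Proof.
move=> a_range b_hi g_k.
have [ab | <-] := Rle_lt_or_eq_dec _ _ (proj2 a_range); last ring.
have g_bounds z : 0 <= g z <= 1 by case: (g01 z) => ->; lra.
have k_bounds : 0 <= k <= 1.
  by rewrite -(g_k ((a + b) / 2)); [apply: g_bounds | lra].
apply: Rle_antisym.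
- apply: (le_of_le_add_small _ _ (L - L * k) (b - a)); [lra | nra |].
  move=> e e_range.
  have [_ upper_as] := envelope a (a + e) ltac:(lra) ltac:(lra).
  have [_ upper_sb] := envelope (a + e) b ltac:(lra) ltac:(lra).
  have : e * L * g a <= e * L * 1.
    by apply: Rmult_le_compat_l; [nra | case: (g_bounds a)].
  rewrite g_k in upper_sb; lra.
- apply: (le_of_le_add_small _ _ (L * k) (b - a)); [lra | nra |].
  move=> e e_range.
  have [lower_as _] := envelope a (b - e) ltac:(lra) ltac:(lra).
  have [lower_sb _] := envelope (b - e) b ltac:(lra) ltac:(lra).
  have : 0 <= (b - (b - e)) * L * g b.
    by apply: Rmult_le_pos; [apply: Rmult_le_pos; lra | case: (g_bounds b)].
  rewrite g_k in lower_as; lra.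
Qed.

Lemma envelope_integral c : lo <= c <= hi -> u c - u hi = L * RInt g c hi.
Proof.
move=> c_range.
have [t [t_range [g1 g0]]] : exists t, c <= t <= hi /\
    (forall z, c < z < t -> g z = 1) /\ (forall z, t < z < hi -> g z = 0).
  apply: nonincreasing_01_threshold; [lra | exact: g01 |].
  move=> a b ca ab bd; apply: envelope_nonincreasing; lra.
have int_ct := is_RInt_const_on g c t 1 ltac:(lra) g1.
have int_thi := is_RInt_const_on g t hi 0 ltac:(lra) g0.
rewrite (is_RInt_unique _ _ _ _ (is_RInt_Chasles _ _ _ _ _ _ int_ct int_thi)).
have -> : u c - u hi = (u c - u t) + (u t - u hi) by ring.
rewrite (envelope_const c t 1) ?(envelope_const t hi 0) //; try lra.
by rewrite /plus /=; ring.
Qed.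

End Envelope.

Lemma upd_upd (n : nat) (c : 'I_n -> R) (i : 'I_n) (a b : R) :
  upd (upd c i b) i a = upd c i a.
Proof. by apply: functional_extensionality => j; rewrite /upd; case: (j == i). Qed.

Lemma in_range_upd (n : nat) (lo hi c : 'I_n -> R) (i : 'I_n) (z : R) :
  in_range lo hi c -> lo i <= z <= hi i -> in_range lo hi (upd c i z).
Proof. by move=> c_range z_range j; rewrite /upd; case: eqP => [-> | _]. Qed.

Lemma b2R_01 (b : bool) : b2R b = 0 \/ b2R b = 1.
Proof. by case: b; [right | left]. Qed.

Lemma utility_cost_shift (n : nat) (lam : 'I_n -> R -> R)
  (pi : 'I_n -> ('I_n -> R) -> ('I_n -> R) -> bool)
  (x : 'I_n -> ('I_n -> R) -> ('I_n -> R) -> R) (i : 'I_n) (a b : R)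
  (c p : 'I_n -> R) :
  utility lam pi x i a c p =
    utility lam pi x i b c p + (b - a) * lam i (p i) * b2R (pi i c p).
Proof. rewrite /utility /value; ring. Qed.

Section IncentiveCompatibility.

Variables (n : nat) (lo hi : 'I_n -> R) (lam : 'I_n -> R -> R)
  (pi : 'I_n -> ('I_n -> R) -> ('I_n -> R) -> bool)
  (x : 'I_n -> ('I_n -> R) -> ('I_n -> R) -> R).
Hypothesis ic : IC lo hi lam pi x.
Variables (i : 'I_n) (p c' : 'I_n -> R).
Hypothesis c'_range : in_range lo hi c'.

Let truthful_utility (z : R) : R := utility lam pi x i z (upd c' i z) p.
Let win (z : R) : R := b2R (pi i (upd c' i z) p).

Lemma IC_envelope a b : lo i <= a <= hi i -> lo i <= b <= hi i ->
  (b - a) * lam i (p i) * win b <= truthful_utility a - truthful_utility b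
    <= (b - a) * lam i (p i) * win a.
Proof.
have gain a' b' : lo i <= a' <= hi i -> lo i <= b' <= hi i ->
    (b' - a') * lam i (p i) * win b' <= truthful_utility a' - truthful_utility b'.
  move=> a'_range b'_range.
  have := ic i a' p (upd c' i b') a'_range (in_range_upd _ _ _ _ _ _ c'_range b'_range).
  rewrite upd_upd (utility_cost_shift _ _ _ _ i a' b' (upd c' i b')).
  rewrite /truthful_utility /win; lra.
move=> a_range b_range; split; first exact: gain.
have := gain b a b_range a_range; lra.
Qed.

Lemma truthful_utility_integral ci : 0 < lam i (p i) -> lo i <= ci <= hi i ->
  truthful_utility ci - truthful_utility (hi i) = lam i (p i) * RInt win ci (hi i).
Proof.
move=> lam_gt0; apply: (envelope_integral _ _ _ (lo i)) => // [z | a b].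
- exact: b2R_01.
- exact: IC_envelope.
Qed.

End IncentiveCompatibility.

Theorem lemma2 (n : nat) (lo hi : 'I_n -> R) (lam : 'I_n -> R -> R)
  (pi : 'I_n -> ('I_n -> R) -> ('I_n -> R) -> bool)
  (x : 'I_n -> ('I_n -> R) -> ('I_n -> R) -> R) :
  (forall i, lo i <= hi i) ->
  (forall i q, 0 < lam i q <= 1) ->
  single_slot pi ->
  IC lo hi lam pi x ->
  forall (i : 'I_n) (p c' : 'I_n -> R), in_range lo hi c' ->
  exists U : R, forall ci : R, lo i <= ci <= hi i ->
    x i (upd c' i ci) p =
      value (lam i) ci (p i) * b2R (pi i (upd c' i ci) p)
      - lam i (p i) * RInt (fun z => b2R (pi i (upd c' i z) p)) ci (hi i)
      - U.
Proof.
(* Only [0 < lam i (p i)] is needed: neither the single slot nor [lam <= 1] is used. *)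
move=> _ lam_range _ ic i p c' c'_range.
exists (utility lam pi x i (hi i) (upd c' i (hi i)) p) => ci ci_range.
have := truthful_utility_integral _ _ _ _ _ _ ic i p c' c'_range ci
  (proj1 (lam_range i (p i))) ci_range.
rewrite {1}/utility; lra.
Qed.
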